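(* Let $N\geq 2$ and $k\geq 1$ be integers and let $|\psi_1\rangle,\dots,|\psi_N\rangle$ be linearly independent pure states, each with prior probability $1/N$. For each function $\sigma:\{1,\dots,k\}\to\{1,\dots,N\}$ let $|\psi_\sigma\rangle=|\psi_{\sigma(1)}\rangle\otimes\cdots\otimes|\psi_{\sigma(k)}\rangle$, with prior probability $1/N^k$. Let $p$ be the optimum probability of unambiguous discrimination among the states $|\psi_1\rangle,\dots,|\psi_N\rangle$, and $p_{N,k}$ the optimum probability of unambiguous discrimination among the $N^k$ states $|\psi_\sigma\rangle$. Then $p_{N,k}\geq p^k$.
   Context: Unambiguous discrimination of states $|\chi_1\rangle,\dots,|\chi_M\rangle$ with prior probabilities $\eta_1,\dots,\eta_M$: a POVM $\{E_1,\dots,E_M,E_?\}$ such that $\langle\chi_j|E_i|\chi_j\rangle=0$ for all $i\neq j$, with $E_?$ the inconclusive outcome. Its success probability is $\sum_i\eta_i\langle\chi_i|E_i|\chi_i\rangle$, and the optimum probability of unambiguous discrimination is the supremum of this over all such POVMs. *)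

From HB Require Import structures.
From mathcomp Require Import all_boot all_order all_algebra.
From mathcomp Require Import complex.
From mathcomp Require Import classical_sets reals.
Set Implicit Arguments. Unset Strict Implicit. Unset Printing Implicit Defensive.
Import Order.TTheory GRing.Theory Num.Theory.
Local Open Scope ring_scope.
Local Open Scope complex_scope.

Section QDefs.
Variable R : realType.
Notation C := R[i].

(* A finite-dimensional Hilbert space C^I has orthonormal basis indexed by a
   finite type I; vectors are maps I -> C, operators are "matrices" I -> I -> C. *)
Definition vec (I : finType) := I -> C.
Definition op (I : finType) := I -> I -> C.

Definition braket (I : finType) (u : vec I) (A : op I) (v : vec I) : C :=
  \sum_(x : I) \sum_(y : I) (u x)^* * A x y * v y.

Definition psd (I : finType) (A : op I) : Prop :=
  forall v : vec I, 0 <= braket v A v.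

Definition normalized (I : finType) (v : vec I) : Prop :=
  \sum_(x : I) `|v x| ^+ 2 = 1.

Definition lin_indep (J I : finType) (chi : J -> vec I) : Prop :=
  forall c : J -> C, (forall x : I, \sum_(j : J) c j * chi j x = 0) ->
    forall j, c j = 0.

Definition povm (J I : finType) (E : J -> op I) (Einc : op I) : Prop :=
  (forall j, psd (E j)) /\ psd Einc /\
  (forall x y : I, \sum_(j : J) E j x y + Einc x y = (x == y)%:R).

Definition unambiguous (J I : finType) (chi : J -> vec I) (E : J -> op I) : Prop :=
  forall i j : J, i != j -> braket (chi j) (E i) (chi j) = 0.

(* success probability  sum_i eta_i <chi_i|E_i|chi_i>  (a real number, since
   the E_i are psd; we take its real part to land in R) *)
Definition success (J I : finType) (chi : J -> vec I) (eta : J -> R)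
  (E : J -> op I) : R :=
  complex.Re (\sum_(j : J) (eta j)%:C * braket (chi j) (E j) (chi j)).

Definition opt_ud (J I : finType) (chi : J -> vec I) (eta : J -> R) : R :=
  sup [set s : R | exists (E : J -> op I) (Einc : op I),
        [/\ povm E Einc, unambiguous chi E & s = success chi eta E]].

(* k-fold tensor product state: basis of (C^I)^{(x)k} indexed by {ffun 'I_k -> I} *)
Definition tensor_state (N k : nat) (I : finType) (psi : 'I_N -> vec I)
  (sigma : {ffun 'I_k -> 'I_N}) : vec {ffun 'I_k -> I} :=
  fun x => \prod_(m < k) psi (sigma m) (x m).

End QDefs.

From HB Require Import structures.
From mathcomp Require Import all_boot all_order all_algebra.
From mathcomp Require Import complex.
From mathcomp Require Import classical_sets reals.
From mathcomp Require Import ring.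
Set Implicit Arguments.
Unset Strict Implicit.
Unset Printing Implicit Defensive.
Import Order.TTheory GRing.Theory Num.Theory.
Local Open Scope ring_scope.

(* Let {E_j, E_?} be an unambiguous POVM for the psi_j with success
   probability p, and put a_j = <psi_j|E_j|psi_j>.  The bra
   <h_j| = <psi_j|E_j / sqrt a_j satisfies |<h_j|v>|^2 <= <v|E_j|v> by
   Cauchy-Schwarz, so sum_j |h_j><h_j| <= 1; moreover <h_j|psi_i> = 0 for
   i <> j and |<h_j|psi_j>|^2 = a_j.  Tensor powers preserve the bound
   sum_j |h_j><h_j| <= 1, so the rank-one operators |h_s><h_s| with
   h_s = h_s(1) (x) ... (x) h_s(k), completed by 1 - sum_s |h_s><h_s|, form an
   unambiguous POVM for the psi_s whose success probability factorises as
   p^k.  Taking suprema gives p_{N,k} >= p^k. *)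

Lemma exists_rootn (R : rcfType) (n : nat) (t : R) :
  (0 < n)%N -> 0 <= t -> exists2 r : R, 0 <= r & r ^+ n = t.
Proof.
move=> n_gt0 t_ge0; pose p := 'X^n - t%:P.
have p0 : p.[0] <= 0 by rewrite !hornerE expr0n eqn0Ngt n_gt0 sub0r oppr_le0.
have p1t : 0 <= p.[1 + t].
  by rewrite !hornerE subr_ge0 (le_trans _ (ler_eXnr _ _)) ?lerDr ?lerDl.
have [|r /andP[r_ge0 _]] := @poly_ivt _ p _ _ (ler_wpDl ler01 t_ge0).
  by rewrite p0.
by rewrite /root !hornerE subr_eq0 => /eqP rt; exists r.
Qed.

Lemma sup_exprn_le (R : realType) (S T : set R) (k : nat) : (0 < k)%N ->
  (S !=set0)%classic -> (forall s, S s -> 0 <= s) -> has_ubound T ->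
  (forall s, S s -> T (s ^+ k)) -> sup S ^+ k <= sup T.
Proof.
move=> k_gt0 [s0 Ss0] S_ge0 ubT ST.
have supT_ge0 : 0 <= sup T.
  exact: le_trans (exprn_ge0 k (S_ge0 _ Ss0)) (ub_le_sup ubT (ST _ Ss0)).
have [r r_ge0 rk] := exists_rootn k_gt0 supT_ge0.
have ubS_r : ubound S r.
  move=> s Ss; have := ub_le_sup ubT (ST _ Ss).
  by rewrite -rk ler_pXn2r // nnegrE S_ge0.
have supS_ge0 : 0 <= sup S.
  by apply: le_trans (S_ge0 _ Ss0) (ub_le_sup _ Ss0); exists r.
by rewrite -rk lerXn2r ?nnegrE // ge_sup //; exists s0.
Qed.

Lemma conj_of_real_polar (C : numClosedFieldType) (b d : C) :
  b + d \is Num.real -> 'i * b + 'i^* * d \is Num.real -> b = d^*.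
Proof.
rewrite !CrealE !rmorphD !rmorphM /= conjCK conjCi => /eqP e1 /eqP e2.
have : ('i * (b - d^*)) *+ 2 =
    'i * (b + d - (b^* + d^*)) + ('i * b + - 'i * d - (- 'i * b^* + 'i * d^*)).
  by ring.
rewrite e1 e2 !subrr mulr0 addr0 => /eqP.
by rewrite mulrn_eq0 /= mulf_eq0 (negbTE (neq0Ci C)) subr_eq0 => /eqP.
Qed.

Lemma sqr_norm_sqrtcVM (R : rcfType) (a b : R[i]) : 0 <= a ->
  `|(sqrtc a)^-1 * b| ^+ 2 = a^-1 * `|b| ^+ 2.
Proof.
move=> a_ge0; rewrite normrM normfV (@ger0_norm _ (sqrtc a)) ?sqrtc_ge0 //.
by rewrite exprMn exprVn sqr_sqrtc.
Qed.

Lemma ler_Re (R : rcfType) (z w : R[i]) : z <= w -> complex.Re z <= complex.Re w.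
Proof. by rewrite lecE => /andP[]. Qed.

Lemma Re_exprn_ge0 (R : rcfType) (z : R[i]) k :
  0 <= z -> complex.Re (z ^+ k) = complex.Re z ^+ k.
Proof. by move=> z_ge0; rewrite -[z]RRe_real ?ger0_real // -rmorphXn. Qed.

Section Braket.
Variables (R : realType) (I : finType).
Implicit Types (u v w : vec R I) (A B : op R I).

Lemma eq_braket u v A B : (forall x y, A x y = B x y) ->
  braket u A v = braket u B v.
Proof. by move=> eqAB; apply: eq_bigr => x _; apply: eq_bigr => y _; rewrite eqAB. Qed.

Lemma braketDl u w v A :
  braket (fun x => u x + w x) A v = braket u A v + braket w A v.
Proof.
rewrite /braket -big_split; apply: eq_bigr => x _; rewrite -big_split.
by apply: eq_bigr => y _ /=; rewrite rmorphD; ring.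
Qed.

Lemma braketZl (a : R[i]) u A v :
  braket (fun x => a * u x) A v = a^* * braket u A v.
Proof.
rewrite /braket mulr_sumr; apply: eq_bigr => x _; rewrite mulr_sumr.
by apply: eq_bigr => y _ /=; rewrite rmorphM; ring.
Qed.

Lemma braketDr u v w A :
  braket u A (fun x => v x + w x) = braket u A v + braket u A w.
Proof.
rewrite /braket -big_split; apply: eq_bigr => x _; rewrite -big_split.
by apply: eq_bigr => y _ /=; ring.
Qed.

Lemma braketZr (a : R[i]) u v A :
  braket u A (fun x => a * v x) = a * braket u A v.
Proof.
rewrite /braket mulr_sumr; apply: eq_bigr => x _; rewrite mulr_sumr.
by apply: eq_bigr => y _ /=; ring.
Qed.

Lemma braket_opB u v A B :
  braket u (fun x y => A x y - B x y) v = braket u A v - braket u B v.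
Proof.
rewrite /braket -sumrB; apply: eq_bigr => x _; rewrite -sumrB.
by apply: eq_bigr => y _ /=; ring.
Qed.

Lemma braket_opD u v A B :
  braket u (fun x y => A x y + B x y) v = braket u A v + braket u B v.
Proof.
rewrite /braket -big_split; apply: eq_bigr => x _; rewrite -big_split.
by apply: eq_bigr => y _ /=; ring.
Qed.

Lemma braket_op_sum (J : finType) u v (A : J -> op R I) :
  braket u (fun x y => \sum_j A j x y) v = \sum_j braket u (A j) v.
Proof.
rewrite /braket [RHS]exchange_big; apply: eq_bigr => x _ /=.
rewrite [RHS]exchange_big; apply: eq_bigr => y _ /=.
by rewrite mulr_sumr mulr_suml.
Qed.

Lemma braket_id v : braket v (fun x y => (x == y)%:R) v = \sum_x `|v x| ^+ 2.
Proof.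
apply: eq_bigr => x _; rewrite (bigD1 x) //= eqxx mulr1 normCKC big1 ?addr0 //.
by move=> y; rewrite eq_sym => /negbTE ->; rewrite mulr0 mul0r.
Qed.

Definition pairing (h v : vec R I) : R[i] := \sum_x h x * v x.

Definition rank_one (h : vec R I) : op R I := fun x y => (h x)^* * h y.

Lemma braket_rank_one h v : braket v (rank_one h) v = `|pairing h v| ^+ 2.
Proof.
rewrite normCKC /pairing rmorph_sum mulr_suml; apply: eq_bigr => x _.
rewrite mulr_sumr; apply: eq_bigr => y _; rewrite /rank_one rmorphM; ring.
Qed.

End Braket.

Section Psd.
Variables (R : realType) (I : finType).
Implicit Types (u v w : vec R I) (A : op R I).

Lemma psd_braketC A u w : psd A -> braket u A w = (braket w A u)^*.
Proof.
(* The forms at u + w and u + i w are real. *)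
move=> psdA; apply: conj_of_real_polar.
  have -> : braket u A w + braket w A u =
      braket (fun x => u x + w x) A (fun x => u x + w x) -
      (braket u A u + braket w A w).
    by rewrite !braketDl !braketDr; ring.
  by rewrite rpredB ?rpredD ?ger0_real.
have -> : 'i * braket u A w + 'i^* * braket w A u =
    braket (fun x => u x + 'i * w x) A (fun x => u x + 'i * w x) -
    (braket u A u + 'i^* * 'i * braket w A w).
  by rewrite !braketDl !braketDr !braketZl !braketZr; ring.
by rewrite rpredB ?rpredD ?ger0_real // mulr_ge0 // -normCKC exprn_ge0.
Qed.

Lemma psd_cauchy_schwarz A u w : psd A -> 0 < braket w A w ->
  `|braket w A u| ^+ 2 <= braket w A w * braket u A u.
Proof.
move=> psdA wAw_gt0; set B := braket w A w; set d := braket w A u.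
have := psdA (fun x => B * u x + - d * w x).
rewrite braketDl !braketDr !braketZl !braketZr (psd_braketC u w psdA) -/B -/d.
rewrite (geC0_conj (ltW wAw_gt0)) -/B; set q := (X in 0 <= X -> _).
have -> : q = B * (B * braket u A u - `|d| ^+ 2) by rewrite /q normCK; ring.
by rewrite pmulr_rge0 // subr_ge0.
Qed.

Lemma povm_braket_sum (J : finType) (E : J -> op R I) Einc v : povm E Einc ->
  \sum_j braket v (E j) v + braket v Einc v = \sum_x `|v x| ^+ 2.
Proof.
case=> _ [_ sumE]; rewrite -braket_op_sum -braket_opD -braket_id.
by apply: eq_braket => x y; apply: sumE.
Qed.

Lemma povm_braket_le (J : finType) (E : J -> op R I) Einc v : povm E Einc ->
  \sum_j braket v (E j) v <= \sum_x `|v x| ^+ 2.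
Proof.
by move=> povmE; rewrite -(povm_braket_sum v povmE) lerDl; case: povmE => _ [].
Qed.

End Psd.

Section Bessel.
Variable R : realType.

Section BraOf.
Variable I : finType.
Implicit Types (u v : vec R I) (A : op R I).

(* If <u|A|u> = 0 then (sqrtc 0)^-1 = 0 and the bra is 0. *)
Definition bra_of A u : vec R I :=
  fun x => (sqrtc (braket u A u))^-1 * \sum_y (u y)^* * A y x.

Lemma pairing_bra_of A u v :
  pairing (bra_of A u) v = (sqrtc (braket u A u))^-1 * braket u A v.
Proof.
rewrite /pairing /bra_of; under eq_bigr do rewrite -mulrA; rewrite -mulr_sumr.
congr (_ * _); rewrite [RHS]exchange_big; apply: eq_bigr => x _ /=.
by rewrite mulr_suml.
Qed.

Lemma psd_pairing_bra_of_le A u v : psd A ->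
  `|pairing (bra_of A u) v| ^+ 2 <= braket v A v.
Proof.
move=> psdA; rewrite pairing_bra_of sqr_norm_sqrtcVM //.
have := psdA u; rewrite le_eqVlt => /orP[/eqP <-|uAu_gt0].
  by rewrite invr0 mul0r.
rewrite -(ler_pM2l uAu_gt0) mulrA mulfV ?gt_eqF // mul1r.
exact: psd_cauchy_schwarz.
Qed.

Lemma pairing_bra_of_eq0 A u v : psd A -> braket v A v = 0 ->
  pairing (bra_of A u) v = 0.
Proof.
move=> psdA vAv0; apply/eqP; rewrite -normr_eq0 -sqrf_eq0 eq_le exprn_ge0 //.
by rewrite andbT -vAv0 psd_pairing_bra_of_le.
Qed.

Lemma pairing_bra_of_self A u : psd A ->
  `|pairing (bra_of A u) u| ^+ 2 = braket u A u.
Proof.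
move=> psdA; rewrite pairing_bra_of sqr_norm_sqrtcVM // ger0_norm //.
by have [->|uAu_neq0] := eqVneq (braket u A u) 0; rewrite ?invr0 ?mul0r // expr2 mulKf.
Qed.

End BraOf.

Definition bessel (J I : finType) (h : J -> vec R I) : Prop :=
  forall v : vec R I, \sum_j `|pairing (h j) v| ^+ 2 <= \sum_x `|v x| ^+ 2.

Lemma povm_bessel (J I : finType) (E : J -> op R I) Einc (u : J -> vec R I) :
  povm E Einc -> bessel (fun j => bra_of (E j) (u j)).
Proof.
move=> povmE v; apply: le_trans (povm_braket_le v povmE); apply: ler_sum => j _.
by apply: psd_pairing_bra_of_le; case: povmE.
Qed.

Lemma bessel_povm (J I : finType) (h : J -> vec R I) : bessel h ->
  povm (fun j => rank_one (h j))
       (fun x y => (x == y)%:R - \sum_j rank_one (h j) x y).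
Proof.
move=> besselh; split; [|split].
- by move=> j v; rewrite braket_rank_one exprn_ge0.
- move=> v; rewrite braket_opB braket_op_sum braket_id subr_ge0.
  by under eq_bigr do rewrite braket_rank_one; apply: besselh.
- by move=> x y; rewrite addrC subrK.
Qed.

Lemma unambiguous_rank_one (J I : finType) (chi h : J -> vec R I) :
  (forall i j, i != j -> pairing (h i) (chi j) = 0) ->
  unambiguous chi (fun j => rank_one (h j)).
Proof. by move=> orth i j ij; rewrite braket_rank_one orth // normr0 expr2 mulr0. Qed.

End Bessel.

Section FfunBig.
Variable T : finType.

Definition ffun_cons k (a : T) (y : {ffun 'I_k -> T}) : {ffun 'I_k.+1 -> T} :=
  [ffun i => if unlift ord0 i is Some m then y m else a].

Lemma ffun_cons0 k a (y : {ffun 'I_k -> T}) : ffun_cons a y ord0 = a.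
Proof. by rewrite ffunE unlift_none. Qed.

Lemma ffun_consS k a (y : {ffun 'I_k -> T}) m : ffun_cons a y (lift ord0 m) = y m.
Proof. by rewrite ffunE liftK. Qed.

Lemma big_ffun_cons (V : nmodType) k (F : {ffun 'I_k.+1 -> T} -> V) :
  \sum_x F x = \sum_a \sum_(y : {ffun 'I_k -> T}) F (ffun_cons a y).
Proof.
rewrite pair_big /= (reindex (fun p => ffun_cons p.1 p.2)) //.
exists (fun x : {ffun 'I_k.+1 -> T} => (x ord0, [ffun m => x (lift ord0 m)]))
  => [[a y] _ | x _] /=.
  by rewrite ffun_cons0; congr pair; apply/ffunP => m; rewrite ffunE ffun_consS.
by apply/ffunP => i; rewrite ffunE; case: unliftP => [j ->|->]; rewrite ?ffunE.
Qed.

Lemma big_ffun0 (V : nmodType) (F : {ffun 'I_0 -> T} -> V) :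
  \sum_x F x = F (ffun0 (card_ord 0)).
Proof.
by rewrite (big_pred1 (ffun0 (card_ord 0))) // => x; apply/esym/eqP/ffunP => -[].
Qed.

Lemma sum_ffun_prod (V : comPzSemiRingType) k (F : T -> V) :
  \sum_(t : {ffun 'I_k -> T}) \prod_(m < k) F (t m) = (\sum_a F a) ^+ k.
Proof. by rewrite -(bigA_distr_bigA (fun _ => F)) prodr_const card_ord. Qed.

End FfunBig.

Section Tensor.
Variables (R : realType) (J I : finType).

Definition tensor_vec k (h : J -> vec R I) (s : {ffun 'I_k -> J}) :
    vec R {ffun 'I_k -> I} :=
  fun x => \prod_(m < k) h (s m) (x m).

Lemma pairing_tensor_vec k (h u : J -> vec R I) (s t : {ffun 'I_k -> J}) :
  pairing (tensor_vec h s) (tensor_vec u t) =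
  \prod_(m < k) pairing (h (s m)) (u (t m)).
Proof.
rewrite [RHS](bigA_distr_bigA (fun m a => h (s m) a * u (t m) a)).
by apply: eq_bigr => x _; rewrite big_split.
Qed.

Lemma bessel_tensor_vec k (h : J -> vec R I) : bessel h -> bessel (@tensor_vec k h).
Proof.
move=> besselh; elim: k => [|k IH] v.
  by rewrite !big_ffun0 /pairing big_ffun0 /tensor_vec big_ord0 mul1r.
(* w j pairs h j with v in the first tensor factor. *)
pose w j y := pairing (h j) (fun a => v (ffun_cons a y)).
have pairing_cons j t :
    pairing (tensor_vec h (ffun_cons j t)) v = pairing (tensor_vec h t) (w j).
  rewrite /pairing big_ffun_cons exchange_big; apply: eq_bigr => y _.
  rewrite /w /pairing mulr_sumr; apply: eq_bigr => a _.
  rewrite /tensor_vec big_ord_recl !ffun_cons0.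
  under eq_bigr do rewrite !ffun_consS.
  by rewrite mulrCA mulrA.
rewrite big_ffun_cons; under eq_bigr do under eq_bigr do rewrite pairing_cons.
apply: le_trans (ler_sum _ (fun j _ => IH (w j))) _.
rewrite exchange_big [leRHS]big_ffun_cons [leRHS]exchange_big.
by apply: ler_sum => y _; apply: besselh.
Qed.

Lemma success_tensor_rank_one k (chi h : J -> vec R I) (eta : J -> R)
    (etak : {ffun 'I_k -> J} -> R) :
  (forall t, etak t = \prod_(m < k) eta (t m)) ->
  success (tensor_vec chi) etak (fun t => rank_one (tensor_vec h t)) =
  complex.Re ((\sum_j (eta j)%:C%C * `|pairing (h j) (chi j)| ^+ 2) ^+ k).
Proof.
move=> etakE; rewrite /success -sum_ffun_prod; congr complex.Re; apply: eq_bigr => t _.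
rewrite braket_rank_one pairing_tensor_vec normr_prod -prodrXl etakE rmorph_prod.
by rewrite -big_split.
Qed.

End Tensor.

Section Discrimination.
Variables (R : realType) (J I : finType).
Implicit Types (chi : J -> vec R I) (eta : J -> R).

Definition ud_values chi eta : set R :=
  [set s | exists (E : J -> op R I) (Einc : op R I),
    [/\ povm E Einc, unambiguous chi E & s = success chi eta E]].

Lemma success_ge0 chi eta E Einc : (forall j, 0 <= eta j) -> povm E Einc ->
  0 <= success chi eta E.
Proof.
move=> eta_ge0 [psdE _]; apply: (@ler_Re _ 0); apply: sumr_ge0 => j _.
by rewrite mulr_ge0 ?ler0c // psdE.
Qed.

Lemma success_le chi eta E Einc : (forall j, 0 <= eta j) -> povm E Einc ->
  success chi eta E <= complex.Re (\sum_j (eta j)%:C%C * \sum_x `|chi j x| ^+ 2).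
Proof.
move=> eta_ge0 povmE; apply: ler_Re; apply: ler_sum => j _.
rewrite ler_wpM2l ?ler0c //; apply: le_trans (povm_braket_le (chi j) povmE).
by rewrite (bigD1 j) //= lerDl; apply: sumr_ge0 => i _; apply: povmE.1.
Qed.

Lemma has_sup_ud_values chi eta : (forall j, 0 <= eta j) -> has_sup (ud_values chi eta).
Proof.
move=> eta_ge0; pose h (j : J) (x : I) : R[i] := 0.
have pairing_h j v : pairing (h j) v = 0 by apply: big1 => x _; rewrite mul0r.
have besselh : bessel h.
  move=> v; under eq_bigr do rewrite pairing_h normr0 expr2 mulr0.
  by rewrite big1 // sumr_ge0 // => x _; rewrite exprn_ge0.
split.
  exists (success chi eta (fun j => rank_one (h j))), (fun j => rank_one (h j)).
  by eexists; split; [exact: bessel_povm | exact: unambiguous_rank_one |].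
exists (complex.Re (\sum_j (eta j)%:C%C * \sum_x `|chi j x| ^+ 2)).
by move=> _ [E [Einc [povmE _ ->]]]; exact: success_le povmE.
Qed.

Lemma ud_values_ge0 chi eta s : (forall j, 0 <= eta j) -> ud_values chi eta s -> 0 <= s.
Proof. by move=> eta_ge0 [E [Einc [povmE _ ->]]]; exact: success_ge0 povmE. Qed.

End Discrimination.

Lemma ud_values_tensor (R : realType) (J I : finType) (chi : J -> vec R I)
    (eta : J -> R) k (etak : {ffun 'I_k -> J} -> R) p :
  (forall j, 0 <= eta j) -> (forall t, etak t = \prod_(m < k) eta (t m)) ->
  ud_values chi eta p -> ud_values (@tensor_vec R J I k chi) etak (p ^+ k).
Proof.
move=> eta_ge0 etakE [E [Einc [povmE unambE ->]]]; have psdE := povmE.1.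
pose h j := bra_of (E j) (chi j); pose H := @tensor_vec R J I k h.
have orth i j : i != j -> pairing (h i) (chi j) = 0.
  by move=> ij; apply: pairing_bra_of_eq0 (unambE i j ij).
exists (fun t => rank_one (H t)),
  (fun x y => (x == y)%:R - \sum_t rank_one (H t) x y).
split.
- by apply/bessel_povm/bessel_tensor_vec; apply: povm_bessel povmE.
- apply: unambiguous_rank_one => s t st; rewrite pairing_tensor_vec.
  have [m smtm] : exists m, s m != t m.
    apply/existsP; apply: contraNT st; rewrite negb_exists => /forallP st_eq.
    by apply/eqP/ffunP => m; apply/eqP/negPn/st_eq.
  by rewrite (bigD1 m) //= orth ?mul0r.
rewrite (success_tensor_rank_one _ _ etakE).
under eq_bigr => j _ do rewrite (pairing_bra_of_self _ (psdE j)).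
by rewrite Re_exprn_ge0 // sumr_ge0 // => j _; rewrite mulr_ge0 ?ler0c ?psdE.
Qed.

Theorem lemma1 (R : realType) (I : finType) (N k : nat)
  (hN : (2 <= N)%N) (hk : (1 <= k)%N)
  (psi : 'I_N -> vec R I)
  (hnorm : forall n, normalized (psi n))
  (hind : lin_indep psi) :
  opt_ud (fun n : 'I_N => psi n) (fun _ => (N%:R)^-1) ^+ k
    <= opt_ud (tensor_state psi) (fun _ : {ffun 'I_k -> 'I_N} => (N%:R ^+ k)^-1).
Proof.
have eta_ge0 (n : 'I_N) : 0 <= N%:R^-1 :> R by rewrite invr_ge0 ler0n.
have etak_ge0 (t : {ffun 'I_k -> 'I_N}) : 0 <= (N%:R ^+ k)^-1 :> R.
  by rewrite invr_ge0 exprn_ge0 ?ler0n.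
apply: (sup_exprn_le hk).
- exact: (has_sup_ud_values _ eta_ge0).1.
- by move=> p; apply: ud_values_ge0 eta_ge0.
- exact: (has_sup_ud_values _ etak_ge0).2.
- move=> p; apply: ud_values_tensor eta_ge0 _ => t.
  by rewrite prodr_const card_ord exprVn.
Qed.
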